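(* Let $1\le s<t\le n$ and $0<m<\binom{n}{s}$, and let $m+1=\sum_{k=0}^{\ell-1}\binom{n_{s-k}}{s-k}$ be the $s$-cascade representation of $m+1$ (of length $\ell$). Then $k^t_s(m+1)>k^t_s(m)$ if and only if $t\le\ell+n_{s-\ell+1}-1$.
   Context: Colex order on finite subsets of $\mathbb N$: $A<B$ iff $\max(A\triangle B)\in B$. $\mathbb C^{(s)}(m)$ is the $s$-graph whose edges are the first $m$ $s$-subsets of $\mathbb N$ in colex order, and $k^t_s(m)$ is the number of $t$-sets all of whose $s$-subsets are edges of $\mathbb C^{(s)}(m)$. A strict $s$-cascade is an integer sequence $n_s>n_{s-1}>\dots>n_{s-\ell+1}$ with $0\le\ell\le s$ and $n_{s-k}\ge s-k$ for all $k$; every $m\ge0$ has a unique representation $m=\sum_{k=0}^{\ell-1}\binom{n_{s-k}}{s-k}$ by a strict $s$-cascade (its $s$-cascade representation, of length $\ell$). *)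

From mathcomp Require Import all_boot.
Unset Printing Implicit Defensive.

(* Finite subsets of {0,...,N-1}; N is a "universe" bound. *)

Definition colex_lt (N : nat) (A B : {set 'I_N}) : bool :=
  [exists x in B :\: A, [forall y in (A :\: B) :|: (B :\: A), (y <= x)%N]].

(* A is an edge of C^(s)(m): A is an s-set among the first m s-sets in colex
   order, i.e. fewer than m s-sets precede it. *)
Definition colex_edge (N s m : nat) (A : {set 'I_N}) : bool :=
  (#|A| == s) && (#|[set B : {set 'I_N} | (#|B| == s) && colex_lt N B A]| < m).

Definition kts (N s t m : nat) : nat :=
  #|[set K : {set 'I_N} | (#|K| == t) &&
      [forall A : {set 'I_N}, ((A \subset K) && (#|A| == s)) ==> colex_edge N s m A]]|.

(* c = [:: n_s; n_{s-1}; ...; n_{s-l+1}] is a strict s-cascade representing m. *)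
Definition cascade_rep (s m : nat) (c : seq nat) : Prop :=
  [/\ size c <= s,
      sorted (fun a b => b < a) c,
      forall k, k < size c -> s - k <= nth 0 c k
    & m = \sum_(k < size c) 'C(nth 0 c k, s - k)].

(* Encode a set A by its binary weight \sum_(i in A) 2 ^ i: colex order is the
   order of weights, so the colex rank of an s-set counts the s-sets of smaller
   weight. The s-set E of rank m (the new edge of C^(s)(m+1)) is read off the
   cascade of m + 1: E = {n_s, ..., n_(s-l+2)} together with the interval
   [n_(s-l+1) - (s-l+1), n_(s-l+1)). Since E is the only new edge, k^t_s grows iff
   some t-set K containing E has all its s-subsets of rank at most m. Swapping an
   element of E for a larger element of K would raise the rank, so K \ E lies
   below min E and t - s <= min E; conversely E together with [0, t - s) is such
   a K. Finally min E = n_(s-l+1) - (s-l+1). *)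

From mathcomp Require Import all_boot.
From mathcomp Require Import zify.

Section Colex.

Local Set Implicit Arguments.
Local Unset Strict Implicit.

Context {N : nat}.
Implicit Types (s m k : nat) (A B E K S : {set 'I_N}) (x y z : 'I_N).

Definition weight A : nat := \sum_(i in A) 2 ^ i.

Lemma weight_setD1 A y : y \in A -> weight A = 2 ^ y + weight (A :\ y).
Proof. by move=> yA; rewrite /weight (big_setD1 _ yA). Qed.

Lemma leq_exp_weight A y : y \in A -> 2 ^ y <= weight A.
Proof. by move=> /weight_setD1 ->; apply: leq_addr. Qed.

Lemma weight_lt_exp k S : (forall y, y \in S -> y < k) -> weight S < 2 ^ k.
Proof.
elim: k S => [|k IHk] S ltSk.
  suff -> : S = set0 by rewrite /weight big_set0.
  by apply/setP => y; rewrite inE; apply/negP => /ltSk.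
have ltSk' y : y \in S -> y != k :> nat -> y < k.
  by move=> /ltSk /[swap] /eqP; lia.
rewrite expnS mul2n -addnn.
have [y /andP[yS /eqP yk]|noS] := pickP [pred y : 'I_N | (y \in S) && (y == k :> nat)].
  rewrite (weight_setD1 yS) yk ltn_add2l; apply: IHk => z /setD1P[zy zS].
  by apply: (ltSk' _ zS); apply: contra zy => /eqP zk; apply/eqP/val_inj; rewrite /= zk.
apply: ltn_addr; apply: IHk => z zS; apply: (ltSk' z zS).
by apply/negP => zk; have := noS z; rewrite /= zS zk.
Qed.

Lemma weight_lt_maxD A B x :
  x \in B :\: A -> (forall y, y \in A :\: B -> y < x) -> weight A < weight B.
Proof.
move=> xBA ltABx.
rewrite /weight (big_setID (A := A) B) (big_setID (A := B) A) /= setIC ltn_add2l.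
exact: leq_trans (weight_lt_exp ltABx) (leq_exp_weight xBA).
Qed.

Lemma colex_lt_weight A B : colex_lt N A B -> weight A < weight B.
Proof.
case/exists_inP => x xBA /forall_inP lex; apply: (weight_lt_maxD xBA) => y yAB.
have neq_yx : y != x.
  by apply: contraTneq yAB => ->; case/setDP: xBA => _ /negbTE; rewrite inE => ->; rewrite andbF.
by rewrite ltn_neqAle neq_yx lex // inE yAB.
Qed.

Lemma colex_lt_total A B : A != B -> colex_lt N A B || colex_lt N B A.
Proof.
move=> neqAB; set D := (A :\: B) :|: (B :\: A).
have [y yD] : exists y, y \in D.
  apply/set0Pn; apply: contra neqAB => /eqP D0; apply/eqP/setP => z.
  have := in_set0 z; rewrite -D0 !inE.
  by case: (z \in A); case: (z \in B).
have [x xD maxx] := arg_maxnP (fun i : 'I_N => val i) yD.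
have maxx' z : z \in (B :\: A) :|: (A :\: B) -> z <= x by rewrite setUC => /maxx.
case/setUP: xD => [xAB|xBA]; apply/orP; [right|left];
  by apply/exists_inP; exists x => //; apply/forall_inP.
Qed.

Lemma colex_ltE A B : colex_lt N A B = (weight A < weight B).
Proof.
apply/idP/idP => [|ltAB]; first exact: colex_lt_weight.
have neqAB : A != B by apply: contraTneq ltAB => ->; rewrite ltnn.
by case/orP: (colex_lt_total neqAB) => // /colex_lt_weight; lia.
Qed.

Lemma weight_inj : injective weight.
Proof.
move=> A B eqAB; apply/eqP; apply: contraT => /colex_lt_total.
by case/orP => /colex_lt_weight; rewrite eqAB ltnn.
Qed.

Lemma card_ord_prefix k : k <= N -> #|[set y : 'I_N | y < k]| = k.
Proof.
move=> leqkN; have widen_inj : injective (widen_ord leqkN).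
  by move=> i j eq_ij; apply: val_inj; exact: (congr1 val eq_ij).
rewrite -[RHS]card_ord -(card_imset _ widen_inj).
apply: eq_card => y; rewrite inE; apply/idP/imsetP => [ltyk|[i _ ->]]; last exact: (ltn_ord i).
by exists (Ordinal ltyk) => //; apply: val_inj.
Qed.

Lemma card_ltn_bound S k : (forall y, y \in S -> y < k) -> #|S| <= k.
Proof.
move=> ltSk; have [leqkN|ltNk] := leqP k N.
  rewrite -(card_ord_prefix leqkN) subset_leq_card //.
  by apply/subsetP => y /ltSk; rewrite inE.
by rewrite (leq_trans (max_card _)) // card_ord ltnW.
Qed.

Definition colex_rank s A : nat :=
  #|[set B : {set 'I_N} | (#|B| == s) && (weight B < weight A)]|.

Lemma colex_edgeE s m A : colex_edge N s m A = (#|A| == s) && (colex_rank s A < m).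
Proof.
rewrite /colex_edge /colex_rank; congr (_ && (_ < _)).
by apply: eq_card => B; rewrite !inE colex_ltE.
Qed.

Lemma leq_colex_rank s A B : weight A <= weight B -> colex_rank s A <= colex_rank s B.
Proof.
move=> leAB; apply/subset_leq_card/subsetP => C; rewrite !inE => /andP[-> ltCA].
exact: leq_trans ltCA leAB.
Qed.

Lemma ltn_colex_rank s A B :
  #|A| = s -> weight A < weight B -> colex_rank s A < colex_rank s B.
Proof.
move=> cardA ltAB; apply/proper_card/properP; split.
  by apply/subsetP => C; rewrite !inE => /andP[-> ltCA]; apply: ltn_trans ltCA ltAB.
by exists A; rewrite !inE cardA eqxx //= ltnn.
Qed.

Lemma colex_rank_max s A x : 0 < s -> x \in A -> (forall y, y \in A -> y <= x) ->
  colex_rank s A = 'C(x, s) + colex_rank s.-1 (A :\ x).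
Proof.
move=> s_gt0 xA maxx.
have ltAx : weight (A :\ x) < 2 ^ x.
  apply: weight_lt_exp => y /setD1P[neq_yx /maxx]; rewrite leq_eqVlt => /orP[/eqP eq_yx|//].
  by case/eqP: neq_yx; apply: val_inj.
have weightA : weight A = 2 ^ x + weight (A :\ x) := weight_setD1 xA.
rewrite /colex_rank -(cardsID [set B : {set 'I_N} | x \in B]) addnC; congr (_ + _).
  (* without x, [weight B < weight A] means exactly [B \subset [0, x)] *)
  rewrite -(card_ord_prefix (ltnW (ltn_ord x))) -cards_draws; apply: eq_card => B.
  rewrite !inE; apply/idP/idP => [/and3P[xB cardB ltBA]|/andP[/subsetP subB ->]].
    rewrite cardB andbT; apply/subsetP => y yB; rewrite inE ltnNge.
    apply: contra xB; rewrite leq_eqVlt => /orP[/eqP/val_inj -> //|ltxy].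
    have := leq_exp_weight yB; have : 2 ^ x.+1 <= 2 ^ y by rewrite leq_exp2l.
    by rewrite expnS; lia.
  apply/and3P; split => //; first by apply/negP => /subB; rewrite inE ltnn.
  apply: leq_trans (leq_exp_weight xA); apply: weight_lt_exp => y /subB; by rewrite inE.
set P := _ :&: _.
have injD1 : {in P &, injective (fun B : {set 'I_N} => B :\ x)}.
  move=> B1 B2; rewrite !inE => /andP[_ xB1] /andP[_ xB2] eqB.
  by rewrite -(setD1K xB1) -(setD1K xB2) eqB.
rewrite -(card_in_imset injD1); apply: eq_card => C; rewrite inE; apply/imsetP/idP.
  case=> B; rewrite !inE => /andP[/andP[/eqP cardB ltBA] xB] ->.
  rewrite -cardB (cardsD1 x B) xB eqxx /=.
  by move: ltBA; rewrite (weight_setD1 xB) weightA ltn_add2l.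
case/andP => /eqP cardC ltCA; have xC : x \notin C.
  by apply/negP => /leq_exp_weight; lia.
exists (x |: C); last by rewrite setU1K.
rewrite !inE eqxx andbT cardsU1 xC cardC add1n prednK // eqxx /=.
by rewrite (weight_setD1 (setU11 x C)) setU1K // weightA ltn_add2l.
Qed.

Lemma card_ord_interval a b : b <= N -> #|[set z : 'I_N | a <= z < b]| = b - a.
Proof.
move=> leqbN; have -> : [set z : 'I_N | a <= z < b] =
    [set z : 'I_N | z < b] :\: [set z : 'I_N | z < a].
  by apply/setP => z; rewrite !inE -leqNgt.
have [leqab|ltba] := leqP a b.
  rewrite cardsD (setIidPr _) ?card_ord_prefix // ?(leq_trans leqab) //.
  by apply/subsetP => z; rewrite !inE => /leq_trans; apply.
rewrite (eqP (ltnW ltba : b - a == 0)); apply/eqP; rewrite cards_eq0 setD_eq0.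
by apply/subsetP => z; rewrite !inE => /ltn_trans; apply.
Qed.

Lemma colex_rank_interval a s : a + s <= N ->
  colex_rank s [set z : 'I_N | a <= z < a + s] = 'C(a + s, s).-1.
Proof.
elim: s => [|s IHs] leqN.
  rewrite bin0; apply/eqP; rewrite cards_eq0; apply/eqP/setP => B.
  suff -> : [set z : 'I_N | a <= z < a + 0] = set0 by rewrite !inE /weight big_set0 andbF.
  by apply/setP => z; rewrite !inE addn0; case: leqP.
have ltN : a + s < N by rewrite -addnS.
set x := Ordinal ltN.
have -> : [set z : 'I_N | a <= z < a + s.+1] = x |: [set z : 'I_N | a <= z < a + s].
  apply/setP => z; rewrite !inE addnS ltnS [z <= _]leq_eqVlt -val_eqE /=.
  by case: eqP => [->|]; rewrite ?leq_addr.
rewrite (@colex_rank_max _ _ x) ?setU11 //; last first.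
  by move=> z; rewrite !inE => /predU1P[-> //|/andP[_ /ltnW]].
rewrite setU1K ?IHs ?inE ?ltnn ?andbF 1?ltnW // addnS binS /= -!subn1.
by rewrite addnBA // bin_gt0 leq_addl.
Qed.

Lemma colex_rank_inj s A B :
  #|A| = s -> #|B| = s -> colex_rank s A = colex_rank s B -> A = B.
Proof.
move=> cardA cardB eq_rank; apply: weight_inj.
case: (ltngtP (weight A) (weight B)) => // [/(ltn_colex_rank cardA)|/(ltn_colex_rank cardB)];
  by rewrite eq_rank ltnn.
Qed.

Definition colex_clique s m K : bool :=
  [forall A : {set 'I_N}, ((A \subset K) && (#|A| == s)) ==> colex_edge N s m A].

Lemma colex_cliqueP s m K :
  reflect (forall A, A \subset K -> #|A| = s -> colex_rank s A < m) (colex_clique s m K).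
Proof.
apply: (iffP forall_inP) => [clK A subAK cardA|rankK A /andP[subAK /eqP cardA]].
  by have := clK A; rewrite colex_edgeE subAK cardA eqxx; apply.
by rewrite colex_edgeE cardA eqxx rankK.
Qed.

Lemma ltn_kts s t m E : #|E| = s -> colex_rank s E = m ->
  kts N s t m < kts N s t m.+1 <->
  exists2 K : {set 'I_N}, (#|K| == t) && (E \subset K) & colex_clique s m.+1 K.
Proof.
move=> cardE rankE.
have ktsE k : kts N s t k = #|[set K : {set 'I_N} | (#|K| == t) && colex_clique s k K]| by [].
rewrite !ktsE; set Km := [set K | _ && colex_clique s m K]; set KmS := [set K | _ && _].
have subKm : Km \subset KmS.
  apply/subsetP => K; rewrite !inE => /andP[-> /colex_cliqueP clK] /=.
  by apply/colex_cliqueP => A subAK cardA; rewrite ltnS ltnW ?clK.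
split => [ltKm|[K /andP[cardK subEK] clK]].
  have [K] : exists2 K : {set 'I_N}, K \in KmS & K \notin Km.
    apply/subsetPn; apply: contraTN ltKm => subKmS.
    by rewrite -leqNgt subset_leq_card.
  rewrite !inE => /andP[cardK clK] /nandP[/negP//|/forall_inPn[A /andP[subAK cardA]]].
  rewrite colex_edgeE cardA /= -leqNgt => leq_mA.
  have eqAE : A = E.
    apply: colex_rank_inj (eqP cardA) cardE _; apply/eqP; rewrite eqn_leq rankE leq_mA andbT.
    by rewrite -ltnS; apply/colex_cliqueP: subAK (eqP cardA).
  by exists K; rewrite ?cardK -?eqAE.
apply/proper_card/properP; split => //; exists K; first by rewrite inE cardK.
rewrite inE cardK /=; apply/negP => /colex_cliqueP /(_ E subEK cardE).
by rewrite rankE ltnn.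
Qed.

(* Otherwise swapping z for y in E gives an s-subset of K of larger colex rank. *)
Lemma colex_clique_diff_lt s E K y z : #|E| = s -> E \subset K ->
  colex_clique s (colex_rank s E).+1 K -> y \in K :\: E -> z \in E -> y < z.
Proof.
move=> cardE subEK /colex_cliqueP clK /setDP[yK yE] zE; rewrite ltnNge; apply/negP => lezy.
have ltzy : z < y by rewrite ltn_neqAle lezy andbT; apply: contraNneq yE => /val_inj <-.
set A := y |: (E :\ z).
have yEz : y \notin E :\ z by rewrite inE (negbTE yE) andbF.
have cardA : #|A| = s by rewrite cardsU1 yEz -cardE (cardsD1 z E) zE.
have subAK : A \subset K.
  by apply/subsetP => w /setU1P[-> //|/setD1P[_ /(subsetP subEK)]].
have ltEA : weight E < weight A.
  by rewrite (weight_setD1 zE) (weight_setD1 (setU11 y _)) setU1K // ltn_add2r ltn_exp2l.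
by have := ltn_colex_rank cardE ltEA; rewrite ltnNge -ltnS clK.
Qed.

Lemma colex_clique_prefix s E k : #|E| = s -> (forall z, z \in E -> k <= z) ->
  colex_clique s (colex_rank s E).+1 (E :|: [set y : 'I_N | y < k]).
Proof.
move=> cardE leqkE; apply/colex_cliqueP => A subAK cardA; rewrite ltnS.
have [subEA|/subsetPn[z zE zA]] := boolP (E \subset A).
  suff -> : A = E by exact: leqnn.
  by apply/eqP; rewrite eq_sym eqEcard subEA cardA cardE leqnn.
apply/leq_colex_rank/ltnW/(@weight_lt_maxD _ _ z); first by rewrite inE zA.
move=> y /setDP[yA yE]; apply: leq_trans (leqkE _ zE).
by move: (subsetP subAK y yA); rewrite !inE (negbTE yE).
Qed.

Lemma exists_colex_clique_superset s t E : 0 < s <= t -> #|E| = s ->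
  (exists2 K : {set 'I_N},
     (#|K| == t) && (E \subset K) & colex_clique s (colex_rank s E).+1 K) <->
  (forall z, z \in E -> t - s <= z).
Proof.
move=> /andP[s_gt0 leq_st] cardE; split=> [[K /andP[/eqP cardK subEK] clK] z zE|leqE].
  have <- : #|K :\: E| = t - s by rewrite cardsD (setIidPr subEK) cardK cardE.
  by apply: card_ltn_bound => y yKE; apply: colex_clique_diff_lt clK yKE zE.
have [z zE] : exists z, z \in E by apply/set0Pn; rewrite -card_gt0 cardE.
have leqN : t - s <= N := leq_trans (leqE z zE) (ltnW (ltn_ord z)).
exists (E :|: [set y : 'I_N | y < t - s]); last exact: colex_clique_prefix.
rewrite subsetUl andbT cardsU card_ord_prefix // cardE.
suff -> : E :&: [set y : 'I_N | y < t - s] = set0 by rewrite cards0 subn0 subnKC.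
by apply/setP => y; rewrite !inE ltnNge; case: (boolP (y \in E)) => // /leqE ->.
Qed.

End Colex.

Section Cascade.

Local Set Implicit Arguments.
Local Unset Strict Implicit.

Implicit Types (s k n : nat) (c : seq nat).

Definition strict_cascade s c : Prop :=
  [/\ size c <= s, sorted (fun a b => b < a) c &
      forall k, k < size c -> s - k <= nth 0 c k].

Definition cascade_sum s c : nat := \sum_(k < size c) 'C(nth 0 c k, s - k).

(* For c = [:: n_s; ...; n_(s-l+1)] this is the s-set of colex rank
   cascade_sum s c - 1 (see colex_rank_cascade_set). *)
Fixpoint cascade_mem s c (z : nat) : bool :=
  match c with
  | [::] => false
  | [:: x] => x - s <= z < x
  | x :: c' => (z == x) || cascade_mem s.-1 c' z
  end.

Lemma strict_cascade_behead s x c : strict_cascade s (x :: c) -> strict_cascade s.-1 c.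
Proof.
case=> /= size_c sorted_c geq_c; split; [lia | exact: path_sorted sorted_c |].
by move=> k lt_k; have /= := geq_c k.+1 lt_k; lia.
Qed.

Lemma strict_cascade_head s x c : strict_cascade s (x :: c) -> 0 < s <= x.
Proof. by case=> size_c _ /(_ 0 isT); rewrite subn0 => ->; rewrite (leq_trans _ size_c). Qed.

Lemma cascade_sum_cons s x c : cascade_sum s (x :: c) = 'C(x, s) + cascade_sum s.-1 c.
Proof.
rewrite /cascade_sum big_ord_recl subn0; congr (_ + _).
by apply: eq_bigr => k _; rewrite /= subnS -subn1 subnAC subn1.
Qed.

Lemma cascade_sum_gt0 s c : strict_cascade s c -> c != [::] -> 0 < cascade_sum s c.
Proof.
case: c => [//|x c] /strict_cascade_head /andP[_ leq_sx] _.
by rewrite cascade_sum_cons ltn_addr // bin_gt0.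
Qed.

Lemma cascade_mem_le_head s c z :
  sorted (fun a b => b < a) c -> cascade_mem s c z -> z <= head 0 c.
Proof.
elim: c s => [//|x [|y c] IHc] s /=; first by move=> _ /andP[_ /ltnW].
case/andP=> lt_yx sorted_c /predU1P[-> //|/(IHc _ sorted_c) /= le_zy].
exact: leq_trans le_zy (ltnW lt_yx).
Qed.

Lemma nth_last_le_head c : sorted (fun a b => b < a) c -> nth 0 c (size c).-1 <= head 0 c.
Proof.
elim: c => [//|x [//|y c] IHc] /= /andP[lt_yx sorted_c].
exact: leq_trans (IHc sorted_c) (ltnW lt_yx).
Qed.

Lemma cascade_mem_geq s c k : strict_cascade s c -> c != [::] ->
  (forall z, cascade_mem s c z -> k <= z) <-> k + s + 1 <= size c + nth 0 c (size c).-1.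
Proof.
elim: c s => [//|x [|y c] IHc] s casc_c _.
all: have /andP[s_gt0 leq_sx] := strict_cascade_head casc_c.
  split=> [geq_k | /= leq_k z /andP[le_z _]]; last lia.
  by have /= := geq_k (x - s); rewrite leqnn /=; lia.
have casc_yc := strict_cascade_behead casc_c.
have IH := IHc _ casc_yc isT.
have [/= size_yc _ _] := casc_yc; have [_ /= /andP[lt_yx sorted_yc] _] := casc_c.
have /= le_last := @nth_last_le_head (y :: c) sorted_yc.
split=> [geq_k | /= leq_k z /predU1P[-> | mem_z]].
- have /= := IH.1 (fun z mem_z => geq_k z (introT orP (or_intror mem_z))); lia.
- lia.
- by apply: IH.2 mem_z => /=; lia.
Qed.

Lemma ltn_bin2l n x s : 0 < s <= n -> n < x -> 'C(n, s) < 'C(x, s).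
Proof.
case: s => [//|s] /= leq_sn lt_nx; apply: leq_trans (leq_bin2l _ lt_nx).
by rewrite binS -addn1 leq_add2l bin_gt0 ltnW.
Qed.

Lemma cascade_mem_ltn s c n z : strict_cascade s c ->
  cascade_sum s c <= 'C(n, s) -> cascade_mem s c z -> z < n.
Proof.
case: c => [//|x c] casc_c le_sum.
have /andP[s_gt0 _] := strict_cascade_head casc_c.
have range_s : 0 < s <= n.
  by rewrite s_gt0 -bin_gt0 (leq_trans (cascade_sum_gt0 casc_c isT) le_sum).
have [_ sorted_c _] := casc_c.
rewrite cascade_sum_cons in le_sum.
case: c casc_c le_sum sorted_c => [|y c] casc_c le_sum sorted_c /=.
  move=> /andP[_ lt_zx]; apply: leq_trans lt_zx _; rewrite leqNgt.
  by apply/negP => /(ltn_bin2l range_s); lia.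
move=> mem_z; have /= le_zx := cascade_mem_le_head sorted_c mem_z.
apply: leq_ltn_trans le_zx _; rewrite ltnNge; apply/negP => /(leq_bin2l s) le_bin.
have := cascade_sum_gt0 (strict_cascade_behead casc_c) isT; lia.
Qed.

End Cascade.

Section CascadeSet.

Local Set Implicit Arguments.
Local Unset Strict Implicit.

Context {N : nat}.
Implicit Types (s : nat) (c : seq nat).

Definition cascade_set s c : {set 'I_N} := [set z : 'I_N | cascade_mem s c z].

Lemma cascade_set1 s x : cascade_set s [:: x] = [set z : 'I_N | x - s <= z < x].
Proof. by []. Qed.

Lemma cascade_set_cons s (x : 'I_N) y c :
  cascade_set s [:: val x, y & c] = x |: cascade_set s.-1 (y :: c).
Proof. by apply/setP => z; rewrite !inE -val_eqE. Qed.

Lemma cascade_set_le_head s y c (z : 'I_N) :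
  sorted (fun a b => b < a) (y :: c) -> z \in cascade_set s (y :: c) -> z <= y.
Proof. by move=> sorted_yc; rewrite inE => /(cascade_mem_le_head sorted_yc). Qed.

Lemma card_cascade_set s c : strict_cascade s c -> c != [::] ->
  (forall z, cascade_mem s c z -> z < N) -> #|cascade_set s c| = s.
Proof.
elim: c s => [//|x [|y c] IHc] s casc_c _ ltN.
  have /andP[s_gt0 leq_sx] := strict_cascade_head casc_c.
  have leq_xN : x <= N by have /= := ltN x.-1; lia.
  by rewrite cascade_set1 card_ord_interval //; lia.
have casc_yc := strict_cascade_behead casc_c.
have [_ /= /andP[lt_yx sorted_yc] _] := casc_c.
have ltxN : x < N by apply: ltN; rewrite /= eqxx.
have notin_x : Ordinal ltxN \notin cascade_set s.-1 (y :: c).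
  by apply/negP => /(cascade_set_le_head sorted_yc); rewrite leqNgt lt_yx.
rewrite -[x]/(val (Ordinal ltxN)) cascade_set_cons cardsU1 notin_x IHc // => [|z mem_z].
  by have /andP[s_gt0 _] := strict_cascade_head casc_c; rewrite add1n prednK.
by apply: ltN; apply/orP; right.
Qed.

Lemma colex_rank_cascade_set s c : strict_cascade s c -> c != [::] ->
  (forall z, cascade_mem s c z -> z < N) ->
  colex_rank s (cascade_set s c) = (cascade_sum s c).-1.
Proof.
elim: c s => [//|x [|y c] IHc] s casc_c _ ltN.
  have /andP[s_gt0 leq_sx] := strict_cascade_head casc_c.
  have leq_xN : x <= N by have /= := ltN x.-1; lia.
  have := @colex_rank_interval N (x - s) s; rewrite subnK // cascade_set1 => -> //.
  by rewrite /cascade_sum big_ord1 subn0.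
have casc_yc := strict_cascade_behead casc_c.
have [_ /= /andP[lt_yx sorted_yc] _] := casc_c.
have ltxN : x < N by apply: ltN; rewrite /= eqxx.
have notin_x : Ordinal ltxN \notin cascade_set s.-1 (y :: c).
  by apply/negP => /(cascade_set_le_head sorted_yc); rewrite leqNgt lt_yx.
have /andP[s_gt0 _] := strict_cascade_head casc_c.
rewrite -[x]/(val (Ordinal ltxN)) cascade_set_cons.
rewrite (colex_rank_max (x := Ordinal ltxN)) ?setU11 //.
  rewrite setU1K // IHc // => [|z mem_z]; last by apply: ltN; apply/orP; right.
  have := cascade_sum_gt0 casc_yc isT; rewrite [in RHS]cascade_sum_cons /=; lia.
by move=> z /setU1P[-> // | /(cascade_set_le_head sorted_yc) /leq_trans/(_ (ltnW lt_yx))].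
Qed.

End CascadeSet.

Theorem mainTheorem10 (n s t m : nat) (c : seq nat) (N : nat) :
  1 <= s -> s < t -> t <= n -> 0 < m -> m < 'C(n, s) ->
  n <= N ->
  cascade_rep s m.+1 c ->
  (kts N s t m.+1 > kts N s t m) <->
  (t + 1 <= size c + nth 0 c (size c).-1).
Proof.
move=> s_gt0 lt_st _ _ lt_m_bin leq_nN [size_c sorted_c geq_c def_m].
have casc_c : strict_cascade s c by [].
have sum_c : cascade_sum s c = m.+1 by rewrite def_m.
have c_nil : c != [::] by apply: contra_eqN sum_c => /eqP ->; rewrite /cascade_sum big_ord0.
have ltN z : cascade_mem s c z -> z < N.
  by move/(cascade_mem_ltn casc_c); rewrite sum_c => /(_ n lt_m_bin)/leq_trans; apply.
set E : {set 'I_N} := cascade_set s c.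
have cardE : #|E| = s := card_cascade_set casc_c c_nil ltN.
have rankE : colex_rank s E = m by rewrite colex_rank_cascade_set // sum_c.
rewrite (ltn_kts t cardE rankE) -rankE exists_colex_clique_superset //; last first.
  by rewrite s_gt0 ltnW.
have -> : t + 1 = t - s + s + 1 by rewrite subnK // ltnW.
rewrite -cascade_mem_geq //; split=> geqE z mem_z.
  by apply: (geqE (Ordinal (ltN z mem_z))); rewrite inE.
by apply: geqE; rewrite inE in mem_z.
Qed.
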